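(* Let $N\ge2$. The following rules define an action of the braid-cyclic group $BC_N$ on the set of all trees with $N$ edges labelled bijectively by $0,1,\dots,N-1$ (considered up to label-preserving isomorphism): (1) the generator $u_k$ ($1\le k\le N-1$) affects only the edges labelled $k-1$ and $k$: (a) if these two edges have no common vertex, they exchange their labels (the tree is unchanged); (b) if the edge labelled $k-1$ joins vertices $A$ and $B$ and the edge labelled $k$ joins $A$ and $C$, then the edge $AB$ receives label $k$, the edge $AC$ is erased, and a new edge $BC$ is drawn and labelled $k-1$; (2) the generator $\lambda$ does not change the tree but shifts the edge labels cyclically, $i\mapsto i+1 \pmod N$.
   Context: The braid-cyclic group $BC_N$ is the subgroup of $\mathrm{Aut}(F(s_0,\dots,s_{N-1}))$ ($F$ the free group on $s_0,\dots,s_{N-1}$) generated by $\lambda$ and $u_1,\dots,u_{N-1}$, where $\lambda(s_k)=s_{k+1}$ (indices mod $N$), $u_k(s_{k-1})=s_k$, $u_k(s_k)=s_k^{-1}s_{k-1}s_k$, and $u_k(s_l)=s_l$ for $l\ne k-1,k$. *)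

From mathcomp Require Import all_boot fingroup perm.
Set Implicit Arguments. Unset Strict Implicit. Unset Printing Implicit Defensive.

(* A word is a sequence of letters (i, b): s_i if b = true, s_i^{-1} if b = false. *)
Definition word (N : nat) := seq ('I_N * bool).

Definition reduce N (w : word N) : word N :=
  foldr (fun x acc => match acc with
                      | y :: t => if (y.1 == x.1) && (y.2 != x.2) then t else x :: acc
                      | [::] => [:: x]
                      end) [::] w.

Definition winv N (w : word N) : word N := rev (map (fun x => (x.1, ~~ x.2)) w).

Definition endo (N : nat) := {ffun 'I_N -> word N}.

Definition subst N (f : endo N) (w : word N) : word N :=
  reduce (flatten (map (fun x => if x.2 then f x.1 else winv (f x.1)) w)).

Definition ecomp N (f g : endo N) : endo N := [ffun i => subst f (g i)].

Definition idE N : endo N := [ffun i => [:: (i, true)]].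

Definition lamE N : endo N := [ffun i => [:: (ordS i, true)]].

(* u_k, for k : 'I_N with 1 <= k; ord_pred k is k-1 *)
Definition uE N (k : 'I_N) : endo N :=
  [ffun i => if i == k then [:: (k, false); (ord_pred k, true); (k, true)]
             else if i == ord_pred k then [:: (k, true)]
             else [:: (i, true)]].

(* BC_N: the subgroup of Aut(F) generated by lambda and u_1..u_{N-1},
   as the closure under composition and inverses *)
Inductive inBC N : endo N -> Prop :=
  | BC_lam : inBC (lamE N)
  | BC_u (k : 'I_N) : 0 < k -> inBC (uE k)
  | BC_comp f g : inBC f -> inBC g -> inBC (ecomp f g)
  | BC_inv f g : inBC f -> ecomp f g = idE N -> ecomp g f = idE N -> inBC g.

(* vertices 'I_N.+1; the edge labelled i joins (t i).1 and (t i).2 *)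
Definition treeRep (N : nat) := {ffun 'I_N -> 'I_N.+1 * 'I_N.+1}.

Definition tadj N (t : treeRep N) : rel 'I_N.+1 :=
  fun x y => [exists i, (t i == (x, y)) || (t i == (y, x))].

(* N edges on N+1 vertices, no loops, connected  <=>  a tree *)
Definition is_tree N (t : treeRep N) : bool :=
  [forall i, (t i).1 != (t i).2] && [forall x, forall y, connect (tadj t) x y].

Definition tree_iso N (t t' : treeRep N) : Prop :=
  exists s : {perm 'I_N.+1}, forall i,
    (t' i == (s (t i).1, s (t i).2)) || (t' i == (s (t i).2, s (t i).1)).

(* rule (2): labels shift i -> i+1 mod N *)
Definition lamT N (t : treeRep N) : treeRep N :=
  [ffun i => t (ord_pred i)].

(* rule (1) for u_k: a = endpoints of edge k-1, c = endpoints of edge k *)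
Definition uT N (k : 'I_N) (t : treeRep N) : treeRep N :=
  let a := t (ord_pred k) in let c := t k in
  let newkm1 :=
    if a.1 == c.1 then (a.2, c.2)          (* A = a.1, B = a.2, C = c.2 *)
    else if a.1 == c.2 then (a.2, c.1)     (* A = a.1, B = a.2, C = c.1 *)
    else if a.2 == c.1 then (a.1, c.2)     (* A = a.2, B = a.1, C = c.2 *)
    else if a.2 == c.2 then (a.1, c.1)     (* A = a.2, B = a.1, C = c.1 *)
    else c                                 (* no common vertex: swap labels *)
  in [ffun i => if i == k then a else if i == ord_pred k then newkm1 else t i].

From mathcomp Require Import all_boot fingroup perm.
Set Implicit Arguments. Unset Strict Implicit. Unset Printing Implicit Defensive.

(* Encode a labelled tree t by the tuple (tau_0, ..., tau_{N-1}) of transpositions of its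
   vertex set, tau_i swapping the endpoints of the edge labelled i.  A tree is determined
   by its tuple, and label-preserving isomorphism becomes simultaneous conjugation.
   Endomorphisms of F act on tuples on the right by substitution (the Hurwitz action),
   commuting with conjugation.  The Hurwitz actions of lambda and u_k map tree tuples
   injectively to tree tuples, so they, and hence all of BC_N, permute this finite set;
   letting f act on trees by the inverse of its Hurwitz action gives a left action.  For
   the generators the inverse is given by rules (2) and (1): in rule (1)(b), conjugating
   the transposition of the new edge BC by that of AB gives the transposition of the
   erased edge AC.  This needs the two edges to be non-parallel, which holds in a tree
   since deleting one of two parallel edges would leave N+1 vertices connected by N-1
   edges. *)

Local Open Scope group_scope.

Section HurwitzAction.
Variables (N : nat) (gT : finGroupType).
Implicit Types (P : {ffun 'I_N -> gT}) (w : word N) (f g : endo N).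

Definition eval_letter P (x : 'I_N * bool) : gT :=
  if x.2 then P x.1 else (P x.1)^-1.

Definition eval_word P w : gT := foldr (fun x acc => eval_letter P x * acc) 1 w.

Definition hurwitz f P : {ffun 'I_N -> gT} := [ffun i => eval_word P (f i)].

Definition conj_tuple P (s : gT) : {ffun 'I_N -> gT} := [ffun i => P i ^ s].

Lemma eval_word_cat P w1 w2 : eval_word P (w1 ++ w2) = eval_word P w1 * eval_word P w2.
Proof. by elim: w1 => [|x w1 IH] /=; rewrite ?mul1g // IH mulgA. Qed.

Lemma eval_word_reduce P w : eval_word P (reduce w) = eval_word P w.
Proof.
elim: w => [|x w IH] //=; rewrite -IH /reduce /= -/(reduce w).
case: (reduce w) => [|y t] //=; case: ifP => //= /andP[/eqP eq_xy neq_sign].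
rewrite /eval_letter; case: x y eq_xy neq_sign => [i b] [j c] /= -> /=.
by case: b; case: c => //= _; rewrite mulgA ?mulVg ?mulgV mul1g.
Qed.

Lemma eval_word_winv P w : eval_word P (winv w) = (eval_word P w)^-1.
Proof.
elim: w => [|x w IH]; first by rewrite invg1.
rewrite /winv /= rev_cons -cats1 eval_word_cat -/(winv w) IH /= mulg1 invMg.
by congr (_ * _); rewrite /eval_letter /=; case: x.2; rewrite ?invgK.
Qed.

Lemma eval_word_subst P f w : eval_word P (subst f w) = eval_word (hurwitz f P) w.
Proof.
rewrite /subst eval_word_reduce; elim: w => [|x w IH] //=.
rewrite eval_word_cat IH /eval_letter ffunE.
by case: x.2; rewrite ?eval_word_winv.
Qed.

Lemma hurwitz_comp f g P : hurwitz (ecomp f g) P = hurwitz g (hurwitz f P).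
Proof. by apply/ffunP => i; rewrite !ffunE eval_word_subst. Qed.

Lemma hurwitz_id P : hurwitz (idE N) P = P.
Proof. by apply/ffunP => i; rewrite !ffunE /= /eval_letter /= mulg1. Qed.

Lemma eval_wordJ P s w : eval_word (conj_tuple P s) w = eval_word P w ^ s.
Proof.
elim: w => [|x w IH] /=; first by rewrite conj1g.
by rewrite IH conjMg /eval_letter ffunE; case: x.2; rewrite ?conjVg.
Qed.

Lemma conj_tuple1 P : conj_tuple P 1 = P.
Proof. by apply/ffunP => i; rewrite ffunE conjg1. Qed.

Lemma hurwitzJ f P s : hurwitz f (conj_tuple P s) = conj_tuple (hurwitz f P) s.
Proof. by apply/ffunP => i; rewrite !ffunE eval_wordJ. Qed.

Lemma hurwitz_lam P : hurwitz (lamE N) P = [ffun i => P (ordS i)].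
Proof. by apply/ffunP => i; rewrite !ffunE /= /eval_letter /= mulg1. Qed.

Lemma hurwitz_lam_inj : injective (hurwitz (lamE N)).
Proof.
move=> P Q; rewrite !hurwitz_lam => /ffunP eqPQ; apply/ffunP => i.
by have := eqPQ (ord_pred i); rewrite !ffunE ord_predK.
Qed.

Lemma hurwitz_u (k : 'I_N) P i :
  hurwitz (uE k) P i =
  if i == k then P (ord_pred k) ^ P k else if i == ord_pred k then P k else P i.
Proof.
rewrite !ffunE; case: (eqVneq i k) => [eq_ik|_] /=.
  by subst i; rewrite /eval_letter /= mulg1 conjgE.
by case: (eqVneq i (ord_pred k)) => _; rewrite /= /eval_letter /= mulg1.
Qed.

Lemma hurwitz_u_inj (k : 'I_N) : ord_pred k != k -> injective (hurwitz (uE k)).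
Proof.
move=> kp_neq_k P Q /ffunP eqPQ.
have eqPQk : P k = Q k by have := eqPQ (ord_pred k); rewrite !hurwitz_u (negbTE kp_neq_k) eqxx.
apply/ffunP => i; have := eqPQ i; rewrite !hurwitz_u.
case: (eqVneq i k) => [->|_] //; case: (eqVneq i (ord_pred k)) => [->|_] //.
by have := eqPQ k; rewrite !hurwitz_u eqxx eqPQk => /conjg_inj.
Qed.

End HurwitzAction.

Lemma eq_tperm (T : finType) (x y u v : T) : u != v ->
  tperm x y = tperm u v -> (x, y) = (u, v) \/ (x, y) = (v, u).
Proof.
move=> neq_uv eq_xy_uv.
have xy_u : tperm x y u = v by rewrite eq_xy_uv tpermL.
have [eq_xu|neq_xu] := eqVneq x u; first by left; rewrite -xy_u -eq_xu tpermL.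
have [eq_yu|neq_yu] := eqVneq y u; first by right; rewrite -xy_u -eq_yu tpermR.
by move: neq_uv; rewrite -xy_u tpermD ?eqxx.
Qed.

Lemma connect_cross (T : finType) (e : rel T) (S : {pred T}) x y :
  connect e x y -> x \in S -> y \notin S ->
  exists u v, [&& e u v, u \in S & v \notin S].
Proof.
case/connectP=> p + ->; elim: p x => [|z p IH] x /=; first by move=> _ ->.
case/andP=> e_xz path_p x_S; case z_S: (z \in S); first exact: IH.
by move=> _; exists x, z; rewrite e_xz x_S z_S.
Qed.

Lemma connected_card_le (T I : finType) (g : I -> T * T) (D : {set I}) :
  (forall x y, connect [rel x y | [exists i in D, (g i == (x, y)) || (g i == (y, x))]] x y) ->
  #|T| <= #|D|.+1.
Proof.
move=> connected; have [->//|T_gt0] := posnP #|T|.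
suff grow j : j < #|T| -> exists (S : {set T}) (E : {set I}),
    [/\ #|S| = j.+1, #|E| = j, E \subset D
      & forall i, i \in E -> ((g i).1 \in S) && ((g i).2 \in S)].
  have [|S [E [_ card_E sub_ED _]]] := grow #|T|.-1; first by rewrite prednK.
  by rewrite -(prednK T_gt0) ltnS -card_E subset_leq_card.
elim: j => [|j IH] lt_jT.
  have /set0Pn[x _] : [set: T] != set0 by rewrite -card_gt0 cardsT.
  exists [set x], set0; split; [exact: cards1 | exact: cards0 | exact: sub0set |].
  by move=> i; rewrite in_set0.
have [S [E [card_S card_E sub_ED E_in_S]]] := IH (ltnW lt_jT).
have [y y_notin_S] : exists y, y \notin S.
  apply/existsP; apply: contraTT lt_jT; rewrite negb_exists => /forallP S_full.
  rewrite -leqNgt -card_S -cardsT subset_leq_card //.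
  by apply/subsetP => z _; have := S_full z; rewrite negbK.
have [x x_S] : exists x, x \in S by apply/set0Pn; rewrite -card_gt0 card_S.
have [u [v /and3P[/exists_inP[i i_D g_i] u_S v_notin_S]]] :=
  connect_cross (connected x y) x_S y_notin_S.
have i_notin_E : i \notin E.
  by apply/negP => /E_in_S; case/orP: g_i => /eqP -> /=; rewrite (negbTE v_notin_S) ?andbF.
exists (v |: S), (i |: E); split.
- by rewrite cardsU1 v_notin_S card_S.
- by rewrite cardsU1 i_notin_E card_E.
- by rewrite subUset sub1set i_D sub_ED.
- move=> l; rewrite !inE => /orP[/eqP ->|/E_in_S /andP[-> ->]]; last by rewrite !orbT.
  by case/orP: g_i => /eqP -> /=; rewrite u_S eqxx ?orbT.
Qed.

(* The edge labelled [k-1] by rule (1), where [a] and [c] are the edges labelled [k-1] and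
   [k]; [uT] computes it inline. *)
Definition moved_edge (T : eqType) (a c : T * T) : T * T :=
  if a.1 == c.1 then (a.2, c.2) else if a.1 == c.2 then (a.2, c.1)
  else if a.2 == c.1 then (a.1, c.2) else if a.2 == c.2 then (a.1, c.1) else c.

Lemma tperm_moved_edgeJ (T : finType) (a1 a2 c1 c2 : T) : a1 != a2 -> c1 != c2 ->
  (c1, c2) != (a1, a2) -> (c1, c2) != (a2, a1) ->
  let n := moved_edge (a1, a2) (c1, c2) in
  tperm n.1 n.2 ^ tperm a1 a2 = tperm c1 c2.
Proof.
rewrite /moved_edge /= => neq_a neq_c not_par not_antipar; rewrite tpermJ.
have [eq11|neq11] := eqVneq a1 c1.
  subst c1; have neq_a2c2 : a2 != c2 by apply: contraNneq not_par => <-.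
  by rewrite /= tpermR tpermD.
have [eq12|neq12] := eqVneq a1 c2.
  subst c2; have neq_a2c1 : a2 != c1 by apply: contraNneq not_antipar => <-.
  by rewrite /= tpermR tpermD // tpermC.
have [eq21|neq21] := eqVneq a2 c1; first by subst c1; rewrite /= tpermL tpermD.
have [eq22|neq22] := eqVneq a2 c2; first by subst c2; rewrite /= tpermL tpermD // tpermC.
by rewrite !tpermD.
Qed.

Lemma val_ord_pred n (k : 'I_n) : 0 < k -> ord_pred k = k.-1 :> nat.
Proof.
move=> k_gt0; rewrite /= -(prednK k_gt0) addSn /= modnDr modn_small //.
exact: leq_ltn_trans (leq_pred _) (ltn_ord k).
Qed.

Section Trees.
Variable N : nat.
Implicit Types (t a b : treeRep N) (s : {perm 'I_N.+1}) (P : {ffun 'I_N -> {perm 'I_N.+1}}).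

Definition tree_perms t : {ffun 'I_N -> {perm 'I_N.+1}} :=
  [ffun i => tperm (t i).1 (t i).2].

Definition tree_tuples : {set {ffun 'I_N -> {perm 'I_N.+1}}} :=
  [set tree_perms t | t in [pred t | is_tree t]].

Definition relabel s t : treeRep N := [ffun i => (s (t i).1, s (t i).2)].

Lemma tree_loopless t i : is_tree t -> (t i).1 != (t i).2.
Proof. by case/andP=> /forallP. Qed.

Lemma tree_perms_tuples t : is_tree t -> tree_perms t \in tree_tuples.
Proof. by move=> tree_t; apply: imset_f. Qed.

Lemma tree_tuplesP P : P \in tree_tuples -> exists2 t, is_tree t & P = tree_perms t.
Proof. by case/imsetP=> t; exists t. Qed.

Lemma tree_perms_relabel s t : tree_perms (relabel s t) = conj_tuple (tree_perms t) s.
Proof. by apply/ffunP => i; rewrite !ffunE tpermJ. Qed.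

Lemma tree_iso_conj a b s : is_tree a ->
  tree_perms b = conj_tuple (tree_perms a) s -> tree_iso a b.
Proof.
move=> tree_a /ffunP eq_ab; exists s => i.
move: (eq_ab i); rewrite !ffunE tpermJ.
case/eq_tperm => [|<-|<-]; first by rewrite (inj_eq perm_inj) tree_loopless.
  by rewrite -surjective_pairing eqxx.
by rewrite -surjective_pairing eqxx orbT.
Qed.

Lemma tree_iso_perms a b : tree_iso a b -> exists s, tree_perms b = conj_tuple (tree_perms a) s.
Proof.
case=> s iso_s; exists s; apply/ffunP => i; rewrite !ffunE tpermJ.
by case/orP: (iso_s i) => /eqP ->; rewrite // tpermC.
Qed.

Lemma tadj_sym t : symmetric (tadj t).
Proof. by move=> x y; apply/existsP/existsP => -[i adj_i]; exists i; rewrite orbC. Qed.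

Lemma connect_edge t i : connect (tadj t) (t i).1 (t i).2.
Proof. by apply/connect1/existsP; exists i; rewrite -surjective_pairing eqxx. Qed.

Lemma is_tree_connect_edges t t' : is_tree t -> (forall i, (t' i).1 != (t' i).2) ->
  (forall i, connect (tadj t') (t i).1 (t i).2) -> is_tree t'.
Proof.
case/andP=> _ /forallP connected_t loopless_t' edges_t'.
apply/andP; split; first exact/forallP.
apply/forallP => x; apply/forallP => y.
apply: (connect_sub _ (forallP (connected_t x) y)) => u v /existsP[i /orP[] /eqP t_i].
  by have := edges_t' i; rewrite t_i.
by rewrite (sym_connect_sym (@tadj_sym t')); have := edges_t' i; rewrite t_i.
Qed.

Lemma relabel_tree s t : is_tree t -> is_tree (relabel s t).
Proof.
case/andP=> /forallP loopless_t /forallP connected_t; apply/andP; split.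
  by apply/forallP => i; rewrite ffunE (inj_eq perm_inj) loopless_t.
suff connect_relabel u v : connect (tadj t) u v -> connect (tadj (relabel s t)) (s u) (s v).
  apply/forallP => x; apply/forallP => y.
  by have := connect_relabel _ _ (forallP (connected_t (s^-1 x)) (s^-1 y)); rewrite !permKV.
case/connectP=> p + ->; elim: p u => [|z p IH] u /=; first by rewrite connect0.
case/andP=> /existsP[i adj_i] path_p; apply: connect_trans (IH _ path_p).
apply/connect1/existsP; exists i.
by rewrite ffunE; case/orP: adj_i => /eqP ->; rewrite eqxx ?orbT.
Qed.

Lemma conj_tree_tuples P s : P \in tree_tuples -> conj_tuple P s \in tree_tuples.
Proof.
by case/tree_tuplesP=> t tree_t ->; rewrite -tree_perms_relabel tree_perms_tuples ?relabel_tree.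
Qed.

Lemma tree_edges_not_parallel t i j : is_tree t -> i != j ->
  (t j != t i) && (t j != ((t i).2, (t i).1)).
Proof.
case/andP=> _ /forallP connected_t neq_ij; rewrite -negb_or; apply/negP => parallel.
have N_gt0 : 0 < N by apply: leq_ltn_trans (ltn_ord j).
suff : #|'I_N.+1| <= #|[set~ j]|.+1 by rewrite cardsC1 !card_ord prednK // ltnn.
apply: (@connected_card_le _ _ t) => x y.
rewrite -(eq_connect (e := tadj t)) ?(forallP (connected_t x) y) // => u v.
apply/existsP/exists_inP => -[l adj_l]; last by exists l.
have [eq_lj|neq_lj] := eqVneq l j; last by exists l; rewrite ?inE.
exists i; rewrite ?inE //; move: adj_l; rewrite {l}eq_lj.
case/orP: parallel => /eqP ->; first exact: id.
by case: (t i) => a b /=; rewrite !xpair_eqE => /orP[] /andP[-> ->]; rewrite ?orbT.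
Qed.

End Trees.

Section BraidCyclicAction.
Variable N : nat.
Implicit Types (t : treeRep N) (f g : endo N).

Definition permutes_trees f :=
  injective (@hurwitz N {perm 'I_N.+1} f) /\ hurwitz f @: tree_tuples N = tree_tuples N.

Lemma permutes_trees_id : permutes_trees (idE N).
Proof.
split=> [P Q|]; first by rewrite !hurwitz_id.
by rewrite (eq_imset _ (@hurwitz_id _ _)) imset_id.
Qed.

Lemma permutes_trees_comp f g :
  permutes_trees f -> permutes_trees g -> permutes_trees (ecomp f g).
Proof.
move=> [inj_f im_f] [inj_g im_g]; split=> [P Q|].
  by rewrite !hurwitz_comp => /inj_g /inj_f.
by rewrite (eq_imset _ (hurwitz_comp f g)) imset_comp im_f im_g.
Qed.

Lemma permutes_trees_inv f g : permutes_trees f ->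
  ecomp f g = idE N -> ecomp g f = idE N -> permutes_trees g.
Proof.
move=> [_ im_f] fg_id gf_id.
have hurwitzK h1 h2 : ecomp h1 h2 = idE N -> cancel (hurwitz h1) (@hurwitz N {perm 'I_N.+1} h2).
  by move=> h12_id P; rewrite -hurwitz_comp h12_id hurwitz_id.
split; first exact: can_inj (hurwitzK _ _ gf_id).
by rewrite -{1}im_f -imset_comp (eq_imset _ (hurwitzK _ _ fg_id)) imset_id.
Qed.

Lemma permutes_trees_of_sub f : injective (@hurwitz N {perm 'I_N.+1} f) ->
  {in tree_tuples N, forall P, hurwitz f P \in tree_tuples N} -> permutes_trees f.
Proof.
move=> inj_f sub_f; split=> //; apply/eqP; rewrite eqEcard (card_imset _ inj_f) leqnn andbT.
by apply/subsetP => _ /imsetP[P P_tree ->]; apply: sub_f.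
Qed.

Lemma permutes_trees_lam : permutes_trees (lamE N).
Proof.
apply: permutes_trees_of_sub (@hurwitz_lam_inj _ _) _ => _ /tree_tuplesP[t tree_t ->].
have -> : hurwitz (lamE N) (tree_perms t) = tree_perms [ffun i => t (ordS i)].
  by rewrite hurwitz_lam; apply/ffunP => i; rewrite !ffunE.
apply/tree_perms_tuples/(is_tree_connect_edges tree_t) => i; rewrite ?ffunE.
  exact: tree_loopless.
by have := connect_edge [ffun i => t (ordS i)] (ord_pred i); rewrite ffunE ord_predK.
Qed.

Lemma hurwitz_lamT t : hurwitz (lamE N) (tree_perms (lamT t)) = tree_perms t.
Proof. by rewrite hurwitz_lam; apply/ffunP => i; rewrite !ffunE ordSK. Qed.

End BraidCyclicAction.

Section UMove.
Variables (N : nat) (k : 'I_N).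
Hypothesis k_gt0 : 0 < k.
Implicit Types t : treeRep N.
Local Notation kp := (ord_pred k).

Lemma ord_pred_neq : kp != k.
Proof.
apply/eqP => /(congr1 (@nat_of_ord N)); rewrite val_ord_pred // => eq_pred.
by have := ltn_predL k; rewrite eq_pred ltnn k_gt0.
Qed.

Definition uT_inv t : treeRep N :=
  [ffun i => if i == k then (tperm (t k).1 (t k).2 (t kp).1, tperm (t k).1 (t k).2 (t kp).2)
             else if i == kp then t k else t i].

Lemma hurwitz_u_tree_perms t : hurwitz (uE k) (tree_perms t) = tree_perms (uT_inv t).
Proof.
apply/ffunP => i; rewrite hurwitz_u !ffunE.
case: (eqVneq i k) => _; first by rewrite tpermJ.
by case: (eqVneq i kp) => [eq_ikp|_] //; rewrite eq_ikp.
Qed.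

Lemma uT_inv_tree t : is_tree t -> is_tree (uT_inv t).
Proof.
move=> tree_t; set t' := uT_inv t.
have t'_kp : t' kp = t k by rewrite ffunE (negbTE ord_pred_neq) eqxx.
have t'_k : t' k = (tperm (t k).1 (t k).2 (t kp).1, tperm (t k).1 (t k).2 (t kp).2).
  by rewrite ffunE eqxx.
have sym_t' := sym_connect_sym (@tadj_sym _ t').
have edge_k : connect (tadj t') (t k).1 (t k).2 by rewrite -t'_kp connect_edge.
have connect_tperm x : connect (tadj t') x (tperm (t k).1 (t k).2 x).
  case: tpermP => [->|->|_ _]; [exact: edge_k | by rewrite sym_t' | exact: connect0].
apply: (is_tree_connect_edges tree_t) => i.
  rewrite /t' ffunE; case: (eqVneq i k) => _ /=.
    by rewrite (inj_eq perm_inj) tree_loopless.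
  by case: (eqVneq i kp) => _; rewrite tree_loopless.
case: (eqVneq i k) => [->|neq_ik]; first exact: edge_k.
case: (eqVneq i kp) => [->|neq_ikp].
  apply: connect_trans (connect_tperm _) _; rewrite sym_t'.
  apply: connect_trans (connect_tperm _) _; rewrite sym_t'.
  by have := connect_edge t' k; rewrite t'_k.
by have := connect_edge t' i; rewrite ffunE (negbTE neq_ik) (negbTE neq_ikp).
Qed.

Lemma permutes_trees_u : permutes_trees (uE k).
Proof.
apply: permutes_trees_of_sub (hurwitz_u_inj ord_pred_neq) _ => _ /tree_tuplesP[t tree_t ->].
by rewrite hurwitz_u_tree_perms tree_perms_tuples ?uT_inv_tree.
Qed.

Lemma hurwitz_u_uT t : is_tree t -> hurwitz (uE k) (tree_perms (uT k t)) = tree_perms t.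
Proof.
move=> tree_t; apply/ffunP => i; rewrite hurwitz_u.
case: (eqVneq i k) => [->|neq_ik].
  rewrite !ffunE eqxx (negbTE ord_pred_neq) eqxx.
  have /andP[not_par not_antipar] := tree_edges_not_parallel tree_t ord_pred_neq.
  move: (tree_loopless kp tree_t) (tree_loopless k tree_t) not_par not_antipar.
  case: (t kp) (t k) => [a1 a2] [c1 c2] /=; exact: tperm_moved_edgeJ.
case: (eqVneq i kp) => [->|neq_ikp]; first by rewrite !ffunE eqxx.
by rewrite !ffunE (negbTE neq_ik) (negbTE neq_ikp).
Qed.

End UMove.

Section Rho.
Variable N : nat.
Implicit Types (t : treeRep N) (f : endo N).

Lemma inBC_permutes_trees f : inBC f -> permutes_trees f.
Proof.
elim=> {f} [|k k_gt0|f g _ perm_f _ perm_g|f g _ perm_f fg_id gf_id].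
- exact: permutes_trees_lam.
- exact: permutes_trees_u.
- exact: permutes_trees_comp.
- exact: permutes_trees_inv perm_f fg_id gf_id.
Qed.

(* The fallback [t] is junk: it is only used when [tree_perms t] is not a tree tuple. *)
Definition rho f t : treeRep N :=
  if [pick t' | is_tree t' && (hurwitz f (tree_perms t') == tree_perms t)] is Some t'
  then t' else t.

Lemma rho_spec f t : permutes_trees f -> tree_perms t \in tree_tuples N ->
  is_tree (rho f t) /\ hurwitz f (tree_perms (rho f t)) = tree_perms t.
Proof.
move=> [_ im_f] t_tree; rewrite /rho; case: pickP => [t' /andP[-> /eqP] //|no_preimage].
move: t_tree; rewrite -im_f => /imsetP[_ /tree_tuplesP[t' tree_t' ->] eq_t].
by have := no_preimage t'; rewrite tree_t' eq_t eqxx.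
Qed.

Lemma rho_iso f t b s : permutes_trees f -> tree_perms t \in tree_tuples N ->
  hurwitz f (tree_perms b) = conj_tuple (tree_perms t) s -> tree_iso (rho f t) b.
Proof.
move=> perm_f t_tree eq_b; have [tree_rho hurwitz_rho] := rho_spec perm_f t_tree.
apply: tree_iso_conj tree_rho _; apply: perm_f.1.
by rewrite hurwitzJ hurwitz_rho eq_b.
Qed.

Lemma rho_iso1 f t b : permutes_trees f -> is_tree t ->
  hurwitz f (tree_perms b) = tree_perms t -> tree_iso (rho f t) b.
Proof.
move=> perm_f /tree_perms_tuples t_tree eq_b.
by apply: (rho_iso (s := 1)) => //; rewrite conj_tuple1.
Qed.

End Rho.

Theorem mainTheorem10 (N : nat) (hN : 2 <= N) :
  exists rho : endo N -> treeRep N -> treeRep N,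
    (forall f t, inBC f -> is_tree t -> is_tree (rho f t)) /\
    (forall f t t', inBC f -> is_tree t -> tree_iso t t' ->
        tree_iso (rho f t) (rho f t')) /\
    (forall t, is_tree t -> tree_iso (rho (idE N) t) t) /\
    (forall f g t, inBC f -> inBC g -> is_tree t ->
        tree_iso (rho (ecomp f g) t) (rho f (rho g t))) /\
    (forall t, is_tree t -> tree_iso (rho (lamE N) t) (lamT t)) /\
    (forall (k : 'I_N) t, 0 < k -> is_tree t -> tree_iso (rho (uE k) t) (uT k t)).
Proof.
(* The construction works for every [N]. *)
exists (@rho N); split; [|split; [|split; [|split; [|split]]]].
- by move=> f t /inBC_permutes_trees perm_f /tree_perms_tuples /(rho_spec perm_f)[].
- move=> f t t' /inBC_permutes_trees perm_f /tree_perms_tuples t_tree /tree_iso_perms[s eq_t'].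
  have t'_tree : tree_perms t' \in tree_tuples N by rewrite eq_t' conj_tree_tuples.
  apply: (rho_iso perm_f t_tree); rewrite (rho_spec perm_f t'_tree).2; exact: eq_t'.
- by move=> t tree_t; apply: rho_iso1 (permutes_trees_id N) tree_t (hurwitz_id _).
- move=> f g t /inBC_permutes_trees perm_f /inBC_permutes_trees perm_g tree_t.
  have [tree_rho_g hurwitz_rho_g] := rho_spec perm_g (tree_perms_tuples tree_t).
  apply: rho_iso1 (permutes_trees_comp perm_f perm_g) tree_t _.
  by rewrite hurwitz_comp (rho_spec perm_f (tree_perms_tuples tree_rho_g)).2 hurwitz_rho_g.
- by move=> t tree_t; exact: rho_iso1 (permutes_trees_lam N) tree_t (hurwitz_lamT t).
- move=> k t k_gt0 tree_t.
  exact: rho_iso1 (permutes_trees_u k_gt0) tree_t (hurwitz_u_uT k_gt0 tree_t).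
Qed.
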